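(* Let $k\ge0$, let $X_n$ be a homogeneous and spatially independent random subcomplex of $\triangle_n$, let $T\subset\triangle_n$ be a finite $(k+1)$-tree with $\mathbb{P}(T\subset X_n)>0$, and let $\sigma_1,\dots,\sigma_i$ be $(k+1)$-simplices of $\triangle_n$ not in $T$. Then \[ \mathbb{P}(\sigma_j\notin X_n\text{ for all }j=1,\dots,i\mid T\subset X_n)\ge1-i\,s_k . \]
   Context: Random subcomplexes of $\triangle_n=2^{[n]}$ (random families of subsets of $[n]$ closed under subsets); homogeneous: law invariant under permutations of $[n]$; spatially independent: $\mathbb{P}(Y_1\cup Y_2\subset X)\mathbb{P}(Y_1\cap Y_2\subset X)=\mathbb{P}(Y_1\subset X)\mathbb{P}(Y_2\subset X)$ for all subcomplexes $Y_1,Y_2$. A $k$-simplex is a $(k+1)$-element set; $K(\tau)$ denotes the set of all subsets of $\tau$. A finite simplicial complex $T$ is a $(k+1)$-tree if for some $k$-simplex $\tau\in T$ it is obtained from $K(\tau)$ by finitely many steps, each adding $K(\tau'\cup\{v\})$ where $\tau'$ is a $k$-simplex already present and $v$ is a vertex not yet present. $s_k=\mathbb{P}(\tau_1\cup\tau_2\in X_n\mid\tau_1,\tau_2\in X_n)$ if $\mathbb{P}(\tau_1,\tau_2\in X_n)>0$ and $s_k=0$ otherwise, where $\tau_1,\tau_2$ are any $k$-simplices of $\triangle_n$ with $\#(\tau_1\cap\tau_2)=k$ (well defined by homogeneity). *)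

(* Vertex set [n] is modelled as 'I_n; a random subcomplex of
   triangle_n is a probability mass function on families of subsets of 'I_n,
   supported on simplicial complexes (families closed under subsets). *)
From HB Require Import structures.
From mathcomp Require Import all_boot all_order.
From mathcomp Require Import fingroup perm.
From mathcomp Require Import all_algebra.
Set Implicit Arguments. Unset Strict Implicit. Unset Printing Implicit Defensive.
Import Order.TTheory GRing.Theory Num.Theory.
Local Open Scope ring_scope.

Definition is_complex (n : nat) (X : {set {set 'I_n}}) : bool :=
  [forall A : {set 'I_n}, forall B : {set 'I_n}, (A \in X) && (B \subset A) ==> (B \in X)].

Definition random_complex (R : realFieldType) (n : nat)
    (mu : {set {set 'I_n}} -> R) : Prop :=
  [/\ forall X, 0 <= mu X,
      \sum_X mu X = 1
    & forall X, mu X != 0 -> is_complex X].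

Definition prob (R : realFieldType) (n : nat) (mu : {set {set 'I_n}} -> R)
    (E : pred {set {set 'I_n}}) : R :=
  \sum_(X | E X) mu X.

(* conditional probability P(E | F), taken to be 0 if P(F) = 0 *)
Definition cprob (R : realFieldType) (n : nat) (mu : {set {set 'I_n}} -> R)
    (E F : pred {set {set 'I_n}}) : R :=
  if prob mu F == 0 then 0
  else prob mu (fun X => E X && F X) / prob mu F.

Definition homogeneous (R : realFieldType) (n : nat)
    (mu : {set {set 'I_n}} -> R) : Prop :=
  forall (s : {perm 'I_n}) (X : {set {set 'I_n}}),
    mu [set (s @: A) | A : {set 'I_n} in X] = mu X.

Definition spatially_independent (R : realFieldType) (n : nat)
    (mu : {set {set 'I_n}} -> R) : Prop :=
  forall Y1 Y2 : {set {set 'I_n}}, is_complex Y1 -> is_complex Y2 ->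
    prob mu (fun X => (Y1 :|: Y2) \subset X) *
    prob mu (fun X => (Y1 :&: Y2) \subset X) =
    prob mu (fun X => Y1 \subset X) * prob mu (fun X => Y2 \subset X).

(* s_k = P(tau1 \cup tau2 \in X | tau1, tau2 \in X) for k-simplices tau1, tau2
   with #(tau1 \cap tau2) = k, when P(tau1, tau2 \in X) > 0, and 0 otherwise.
   The pair (tau1, tau2) is an arbitrary such pair (well defined by
   homogeneity); if no such pair exists, s_k = 0. *)
Definition s_k (R : realFieldType) (n : nat) (mu : {set {set 'I_n}} -> R)
    (k : nat) : R :=
  match [pick p : {set 'I_n} * {set 'I_n} |
           [&& #|p.1| == k.+1, #|p.2| == k.+1 & #|p.1 :&: p.2| == k]] with
  | Some p =>
      if 0 < prob mu (fun X => (p.1 \in X) && (p.2 \in X))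
      then cprob mu (fun X => (p.1 :|: p.2) \in X)
                    (fun X => (p.1 \in X) && (p.2 \in X))
      else 0
  | None => 0
  end.

Definition Kfull (n : nat) (tau : {set 'I_n}) : {set {set 'I_n}} := powerset tau.

Inductive is_tree (n k : nat) : {set {set 'I_n}} -> Prop :=
  | tree_base (tau : {set 'I_n}) :
      #|tau| = k.+1 -> @is_tree n k (Kfull tau)
  | tree_step (T : {set {set 'I_n}}) (tau' : {set 'I_n}) (v : 'I_n) :
      @is_tree n k T -> tau' \in T -> #|tau'| = k.+1 ->
      v \notin cover T ->
      @is_tree n k (T :|: Kfull (v |: tau')).
Arguments is_tree : clear implicits.

From mathcomp Require Import all_boot all_order.
From mathcomp Require Import fingroup perm.
From mathcomp Require Import all_algebra.
From mathcomp Require Import lra.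
Import Order.TTheory GRing.Theory Num.Theory.
Local Open Scope ring_scope.
Set Implicit Arguments. Unset Strict Implicit.

(* A (k+1)-tree contains every (k+2)-set all of whose edges it contains, so a
   (k+2)-simplex sigma outside T has an edge {a, b} outside T.  Spatial
   independence applied to Y1 = T u K(sigma - a) u K(sigma - b) and
   Y2 = K(sigma), whose intersection is K(sigma - a) u K(sigma - b), gives
   P(sigma, T in X) = P(Y1 in X) s_k <= P(T in X) s_k, where homogeneity lets
   s_k be computed on the adjacent pair sigma - a, sigma - b.  A union bound
   over sigma_1, ..., sigma_i finishes the proof. *)

Definition adjacent (T : finType) (k : nat) (A B : {set T}) : bool :=
  [&& #|A| == k.+1, #|B| == k.+1 & #|A :&: B| == k].

Section Adjacency.

Variable T : finType.

Lemma perm_map_uniq (s t : seq T) : uniq s -> uniq t -> size s = size t ->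
  exists p : {perm T}, map p s = t.
Proof.
elim: s t => [|x s IH] [|y t] //=; first by exists 1%g.
move=> /andP[xs us] /andP[yt ut] [Hsz].
have [p' Hp'] := IH t us ut Hsz.
exists (p' * tperm (p' x) y)%g; rewrite permM tpermL; congr (_ :: _).
rewrite -Hp'; apply/eq_in_map => z Hz; rewrite permM tpermD //.
  by rewrite (inj_eq perm_inj); apply: contraNneq xs => ->.
by apply: contraNneq yt => ->; rewrite -Hp' map_f.
Qed.

Lemma imset_perm_enum (p : {perm T}) (C C' : {set T}) :
  map p (enum C) = enum C' -> p @: C = C'.
Proof.
move=> H; apply/setP => w; rewrite -[w \in C']mem_enum -H.
by apply/imsetP/mapP => -[z Hz ->]; exists z; rewrite ?mem_enum in Hz *.
Qed.

Lemma adjacent_decomp k (A B : {set T}) : adjacent k A B ->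
  exists x y, [/\ x \notin A :&: B, y \notin A :&: B, x != y,
                  A = x |: (A :&: B) & B = y |: (A :&: B)].
Proof.
case/and3P=> /eqP HA /eqP HB /eqP HC.
have add1 (D : {set T}) : #|D| = k.+1 -> D :&: (A :&: B) = A :&: B ->
    exists2 x, x \notin A :&: B & D = x |: (A :&: B).
  move=> HD HDC; have /cards1P[x Hx] : #|D :\: (A :&: B)| == 1%N.
    by rewrite cardsD HDC HD HC subSnn.
  exists x; first by have := set11 x; rewrite -Hx inE => /andP[].
  by rewrite -[in LHS](setID D (A :&: B)) HDC Hx setUC.
have [|x Hx EA] := add1 A HA; first by rewrite setIA setIid.
have [|y Hy EB] := add1 B HB; first by rewrite setIC -setIA setIid.
exists x, y; split => //; apply: contraNneq Hx => Exy.
have xA : x \in A by rewrite EA setU11.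
have xB : x \in B by rewrite Exy EB setU11.
by rewrite inE xA xB.
Qed.

Lemma adjacent_perm k (t1 t2 p1 p2 : {set T}) :
  adjacent k t1 t2 -> adjacent k p1 p2 ->
  exists s : {perm T}, s @: t1 = p1 /\ s @: t2 = p2.
Proof.
move=> ht hp; have hk := and3P ht; have hk' := and3P hp.
have [x [y [Hx Hy Hxy E1 E2]]] := adjacent_decomp ht.
have [x' [y' [Hx' Hy' Hxy' E1' E2']]] := adjacent_decomp hp.
have u1 : uniq (x :: y :: enum (t1 :&: t2)).
  by rewrite /= in_cons !mem_enum (negbTE Hx) Hy enum_uniq orbF Hxy.
have u2 : uniq (x' :: y' :: enum (p1 :&: p2)).
  by rewrite /= in_cons !mem_enum (negbTE Hx') Hy' enum_uniq orbF Hxy'.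
have [p /= [ex ey ee]] : exists p : {perm T},
    map p (x :: y :: enum (t1 :&: t2)) = x' :: y' :: enum (p1 :&: p2).
  apply: perm_map_uniq => //=; rewrite -!cardE.
  by case: hk => _ _ /eqP->; case: hk' => _ _ /eqP->.
exists p; split.
  by rewrite {1}E1 [RHS]E1' imsetU1 ex (imset_perm_enum ee).
by rewrite {1}E2 [RHS]E2' imsetU1 ey (imset_perm_enum ee).
Qed.

Lemma adjacent_setD1 k (s : {set T}) a b :
  #|s| = k.+2 -> a \in s -> b \in s -> a != b -> adjacent k (s :\ a) (s :\ b).
Proof.
move=> Hs Ha Hb Hab.
have bsa : b \in s :\ a by rewrite !inE eq_sym Hab.
have Esa : #|s :\ a| = k.+1 by move: Hs; rewrite (cardsD1 a) Ha add1n => -[].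
have Esb : #|s :\ b| = k.+1 by move: Hs; rewrite (cardsD1 b) Hb add1n => -[].
have EI : (s :\ a) :&: (s :\ b) = (s :\ a) :\ b.
  by apply/setP => x; rewrite !inE; case: (x \in s); rewrite ?andbF ?andbT // andbC.
have : #|s :\ a| = (1 + #|(s :\ a) :\ b|)%N by rewrite (cardsD1 b) bsa.
by rewrite /adjacent Esa Esb EI add1n => -[<-]; rewrite !eqxx.
Qed.

End Adjacency.

Section Complexes.

Variable n : nat.
Implicit Types (X Y : {set {set 'I_n}}) (A B s t : {set 'I_n}).

Lemma is_complexP X :
  reflect (forall A B, A \in X -> B \subset A -> B \in X) (is_complex X).
Proof.
apply: (iffP forallP) => [H A B HA HB|H A].
  by have /forallP/(_ B)/implyP := H A; apply; rewrite HA HB.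
by apply/forallP => B; apply/implyP => /andP[]; apply: H.
Qed.

Lemma is_complex_Kfull t : is_complex (Kfull t).
Proof.
by apply/is_complexP => A B; rewrite !powersetE => HA HB; apply: subset_trans HB HA.
Qed.

Lemma is_complexU X Y : is_complex X -> is_complex Y -> is_complex (X :|: Y).
Proof.
move=> /is_complexP HX /is_complexP HY; apply/is_complexP => A B.
by case/setUP => HA HB; rewrite inE; [rewrite (HX A) | rewrite (HY A) ?orbT].
Qed.

Lemma Kfull_subset X t : is_complex X -> (Kfull t \subset X) = (t \in X).
Proof.
move=> /is_complexP Hc; apply/subsetP/idP => [|Ht B]; first by apply; rewrite powersetE.
by rewrite powersetE; apply: Hc.
Qed.

Lemma setI_Kfull_missing_edge X s a b : is_complex X -> [set a; b] \notin X ->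
  (X :|: (Kfull (s :\ a) :|: Kfull (s :\ b))) :&: Kfull s =
  Kfull (s :\ a) :|: Kfull (s :\ b).
Proof.
move=> /is_complexP cX abX; apply/setP => F; rewrite /Kfull !inE !subsetD1.
case: (F \subset s); rewrite ?andbF ?andbT //=.
case: (boolP (F \in X)) => //= FX.
case: (boolP (a \in F)) => //= aF; case: (boolP (b \in F)) => //= bF.
by case/negP: abX; apply: (cX F) => //; rewrite subUset !sub1set aF bF.
Qed.

Lemma is_complex_tree k X : is_tree n k X -> is_complex X.
Proof.
elim=> [t _|X0 t v _ IH _ _ _]; first exact: is_complex_Kfull.
exact/is_complexU/is_complex_Kfull.
Qed.

(* The vertex v added in a tree step lies on no earlier edge, so a (k+2)-set
   through v all of whose edges are in the tree lies in the new simplex. *)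
Lemma tree_clique k X s : is_tree n k X -> #|s| = k.+2 ->
  (forall a b, a \in s -> b \in s -> a != b -> [set a; b] \in X) -> s \in X.
Proof.
move=> HX; elim: HX s => [t Ht|X0 t v HX0 IH tX0 _ Hv] s Hs Hab.
  have /subset_leq_card : s \subset t.
    apply/subsetP => u Hu.
    have /card_gt0P[w] : (0 < #|s :\ u|)%N.
      by move: Hs; rewrite (cardsD1 u) Hu add1n => -[->].
    rewrite !inE => /andP[Hwu Hw].
    have Huw : u != w by rewrite eq_sym.
    by have := Hab u w Hu Hw Huw; rewrite powersetE subUset sub1set => /andP[].
  by rewrite Hs Ht ltnn.
have vX0 u : [set u; v] \notin X0.
  by apply: contra Hv => Huv; apply/bigcupP; exists [set u; v]; rewrite ?inE ?eqxx ?orbT.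
rewrite inE; have [Hvs|Hvs] := boolP (v \in s).
  apply/orP; right; rewrite powersetE; apply/subsetP => u Hu.
  have [->|Huv] := eqVneq u v; first by rewrite setU11.
  case/setUP: (Hab u v Hu Hvs Huv) => [uvX0|]; first by case/negP: (vX0 u).
  by rewrite powersetE subUset sub1set => /andP[].
apply/orP; left; apply: IH => // a b Ha Hb Hab'.
case/setUP: (Hab a b Ha Hb Hab') => [//|]; rewrite powersetE => Hsub.
apply: (is_complexP _ (is_complex_tree HX0) t) => //.
apply/subsetP => x Hx; have := subsetP Hsub x Hx; rewrite !inE.
case/orP=> [/eqP Exv|//]; move: Hx Hvs; rewrite Exv !inE.
by case/orP=> /eqP ->; rewrite ?Ha ?Hb.
Qed.

Lemma tree_missing_edge k X s : is_tree n k X -> #|s| = k.+2 -> s \notin X ->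
  exists a b, [/\ a \in s, b \in s, a != b & [set a; b] \notin X].
Proof.
move=> HX Hs HsX.
have : ~~ [forall a, forall b, [==> a \in s, b \in s, a != b => [set a; b] \in X]].
  apply: contra HsX => /forallP Hall; apply: tree_clique HX Hs _ => a b Ha Hb Hab.
  by move/forallP: (Hall a) => /(_ b); rewrite Ha Hb Hab.
case/forallPn => a /forallPn[b]; rewrite !negb_imply => /and4P[Ha Hb Hab HabX].
by exists a, b.
Qed.

End Complexes.

Section Probability.

Variables (R : realFieldType) (n : nat) (mu : {set {set 'I_n}} -> R).
Hypothesis mu_ge0 : forall X, 0 <= mu X.
Implicit Types (E F : pred {set {set 'I_n}}).

Lemma prob_ge0 E : 0 <= prob mu E.
Proof. exact: sumr_ge0. Qed.

Lemma le_prob E F : (forall X, E X -> F X) -> prob mu E <= prob mu F.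
Proof.
move=> EF; rewrite /prob big_mkcond [leRHS]big_mkcond; apply: ler_sum => X _.
by case: ifP => [/EF -> //|_]; case: ifP.
Qed.

Lemma probID E F :
  prob mu F = prob mu (fun X => E X && F X) + prob mu (fun X => ~~ E X && F X).
Proof. by rewrite /prob (bigID E) /=; congr (_ + _); apply: eq_bigl => X; rewrite andbC. Qed.

Lemma prob_exists_le (I : finType) (E : I -> pred {set {set 'I_n}}) :
  prob mu (fun X => [exists j, E j X]) <= \sum_j prob mu (E j).
Proof.
rewrite /prob big_mkcond (eq_bigr _ (fun j _ => big_mkcond _ _)) exchange_big /=.
apply: ler_sum => X _; case: ifP => [/existsP[j Ej]|_]; last first.
  by apply: sumr_ge0 => j _; case: ifP.
by rewrite (bigD1 j) //= Ej lerDl; apply: sumr_ge0 => l _; case: ifP.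
Qed.

Hypothesis mu_complex : forall X, mu X != 0 -> is_complex X.

Lemma eq_prob_complex E F :
  (forall X, is_complex X -> E X = F X) -> prob mu E = prob mu F.
Proof.
move=> EF; rewrite /prob big_mkcond [RHS]big_mkcond; apply: eq_bigr => X _.
by have [->|/mu_complex/EF->] := eqVneq (mu X) 0; rewrite ?if_same.
Qed.

End Probability.

Section Homogeneity.

Variables (R : realFieldType) (n : nat) (mu : {set {set 'I_n}} -> R).
Hypotheses (mu_ge0 : forall X, 0 <= mu X) (mu_hom : homogeneous mu).

Lemma prob_perm (s : {perm 'I_n}) (E : pred {set {set 'I_n}}) :
  prob mu (fun X => E [set (s @: A) | A : {set 'I_n} in X]) = prob mu E.
Proof.
rewrite [RHS]/prob (reindex_inj (imset_inj (imset_inj (@perm_inj _ s)))) /=.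
by apply: eq_bigr => X _; rewrite mu_hom.
Qed.

Lemma s_kE k (t1 t2 : {set 'I_n}) : adjacent k t1 t2 ->
  s_k mu k = cprob mu (fun X => (t1 :|: t2) \in X) (fun X => (t1 \in X) && (t2 \in X)).
Proof.
move=> adj; rewrite /s_k; case: pickP => [[p1 p2] /= adjp|]; last first.
  by case/and3P: adj => e1 e2 e3 /(_ (t1, t2)); rewrite /= e1 e2 e3.
have [s [<- <-]] := adjacent_perm adj adjp.
have mem_perm (A : {set 'I_n}) (X : {set {set 'I_n}}) :
    (s @: A \in [set (s @: B) | B : {set 'I_n} in X]) = (A \in X).
  exact/mem_imset/imset_inj/perm_inj.
have Ppair : prob mu (fun X => (s @: t1 \in X) && (s @: t2 \in X)) =
             prob mu (fun X => (t1 \in X) && (t2 \in X)).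
  by rewrite -(prob_perm s); apply: eq_bigl => X; rewrite /= !mem_perm.
have Ptriple :
    prob mu (fun X => (s @: t1 :|: s @: t2 \in X) && ((s @: t1 \in X) && (s @: t2 \in X))) =
    prob mu (fun X => (t1 :|: t2 \in X) && ((t1 \in X) && (t2 \in X))).
  by rewrite -(prob_perm s); apply: eq_bigl => X; rewrite /= -imsetU !mem_perm.
rewrite /cprob Ppair Ptriple.
set q := prob mu (fun X => (t1 \in X) && (t2 \in X)).
have [q0|q0] := eqVneq q 0; first by rewrite q0 ltxx.
by rewrite lt_def q0 prob_ge0.
Qed.

End Homogeneity.

Section TreeSimplex.

Variables (R : realFieldType) (n : nat) (mu : {set {set 'I_n}} -> R).
Hypotheses (mu_rand : random_complex mu) (mu_hom : homogeneous mu)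
  (mu_ind : spatially_independent mu).

Lemma prob_simplex_tree_le k (T : {set {set 'I_n}}) (s : {set 'I_n}) :
  is_tree n k T -> #|s| = k.+2 -> s \notin T ->
  prob mu (fun X => (s \in X) && (T \subset X)) <= s_k mu k * prob mu (fun X => T \subset X).
Proof.
case: mu_rand => mu_ge0 _ mu_complex HT Hs sT; have cT := is_complex_tree HT.
have [a [b [Ha Hb Hab abT]]] := tree_missing_edge HT Hs sT.
set t1 := s :\ a; set t2 := s :\ b.
have Es : t1 :|: t2 = s.
  by apply/setP => x; rewrite !inE -andb_orl; have [->|_] := eqVneq x a; rewrite ?Hab.
have KK : Kfull t1 :|: Kfull t2 \subset Kfull s by rewrite subUset !powersetS !subD1set.
set Y1 := T :|: (Kfull t1 :|: Kfull t2); set Y2 := Kfull s.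
have EU : Y1 :|: Y2 = T :|: Kfull s by rewrite -setUA (setUidPr KK).
have EI : Y1 :&: Y2 = Kfull t1 :|: Kfull t2 := setI_Kfull_missing_edge s cT abT.
have := mu_ind (is_complexU cT (is_complexU (is_complex_Kfull t1) (is_complex_Kfull t2)))
               (is_complex_Kfull s).
rewrite -/Y1 -/Y2 EU EI.
have PU : prob mu (fun X => T :|: Kfull s \subset X) =
          prob mu (fun X => (s \in X) && (T \subset X)).
  by apply: eq_prob_complex => // X cX; rewrite subUset (Kfull_subset _ cX) andbC.
have PI : prob mu (fun X => Kfull t1 :|: Kfull t2 \subset X) =
          prob mu (fun X => (t1 \in X) && (t2 \in X)).
  by apply: eq_prob_complex => // X cX; rewrite subUset !(Kfull_subset _ cX).
have P2 : prob mu (fun X => Y2 \subset X) =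
          prob mu (fun X => (t1 :|: t2 \in X) && ((t1 \in X) && (t2 \in X))).
  apply: eq_prob_complex => // X cX; rewrite (Kfull_subset _ cX) Es.
  case sX: (s \in X) => //=.
  by rewrite (is_complexP _ cX s) ?subD1set // (is_complexP _ cX s) ?subD1set.
have P1 : prob mu (fun X => Y1 \subset X) <= prob mu (fun X => T \subset X).
  by apply: (le_prob mu_ge0) => X; exact: subset_trans (subsetUl _ _).
have Aq : prob mu (fun X => T :|: Kfull s \subset X) <=
          prob mu (fun X => Kfull t1 :|: Kfull t2 \subset X).
  by apply: (le_prob mu_ge0) => X; exact: subset_trans (subset_trans KK (subsetUr _ _)).
rewrite PU PI P2 in Aq *.
rewrite (s_kE mu_ge0 mu_hom (adjacent_setD1 Hs Ha Hb Hab)) /cprob.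
set A := prob mu _ in Aq *; set q := prob mu (fun X => (t1 \in X) && (t2 \in X)) in Aq *.
set r := prob mu (fun X => (t1 :|: t2 \in X) && _) => Hi.
have [q0|q0] := eqVneq q 0; first by rewrite mul0r -q0.
have -> : A = prob mu (fun X => Y1 \subset X) * (r / q) by rewrite mulrA -Hi mulfK.
by rewrite mulrC ler_wpM2l ?divr_ge0 ?prob_ge0.
Qed.

End TreeSimplex.

Theorem lemma4p2 (R : realFieldType) (n k : nat)
    (mu : {set {set 'I_n}} -> R)
    (Hmu : random_complex mu) (Hhom : homogeneous mu)
    (Hind : spatially_independent mu)
    (T : {set {set 'I_n}}) (HT : is_tree n k T)
    (HTpos : 0 < prob mu (fun X => T \subset X))
    (i : nat) (sigma : 'I_i -> {set 'I_n})
    (Hsig : forall j, #|sigma j| = k.+2)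
    (HsigT : forall j, sigma j \notin T) :
  cprob mu (fun X => [forall j, sigma j \notin X]) (fun X => T \subset X)
    >= 1 - i%:R * s_k mu k.
Proof.
have [mu_ge0 _ _] := Hmu.
have Hsplit := probID mu (fun X => [forall j, sigma j \notin X]) (fun X => T \subset X).
set PT := prob mu (fun X => T \subset X) in HTpos Hsplit *.
have Hhit : prob mu (fun X => ~~ [forall j, sigma j \notin X] && (T \subset X)) <=
            i%:R * (s_k mu k * PT).
  apply: (@le_trans _ _
    (prob mu (fun X => [exists j, (sigma j \in X) && (T \subset X)]))).
    apply: (le_prob mu_ge0) => X /andP[/forallPn[j /negbNE sjX] TX].
    by apply/existsP; exists j; rewrite sjX.
  apply: le_trans (prob_exists_le mu_ge0 _) _.
  rewrite mulr_natl -[X in _ *+ X](card_ord i) -sumr_const; apply: ler_sum => j _.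
  exact: prob_simplex_tree_le.
rewrite /cprob (gt_eqF HTpos) ler_pdivlMr // mulrBl mul1r -mulrA -/PT; lra.
Qed.
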